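(* Let $H$ be a Hopf algebra, $S$ an $H$-comodule algebra and $M$ an $(H,S)$-Hopf module such that Condition $(\mathcal{F}_n)$ holds for $0\le n\le 2$, and endow $\mathrm{End}_S(M)$ with the $H$-comodule algebra structure $\Delta_{\mathrm{End}_S(M)}=\omega_1^{-1}\circ b^0$. Then the maps $\omega_0,\omega_1,\omega_2$ (restricted to unit groups) form an isomorphism of pre-cosimplicial groups $\mathcal{C}^\times_{\le2}(H,\mathrm{End}_S(M))\cong\mathcal{W}^\times_{\le2}(H,M)$; i.e. $\omega_j d^i=b^i\omega_{j-1}$ for $1\le j\le2$, $0\le i\le j$.
   Context: $M$ is a right $S$-module with $H$-coaction $\Delta_M$, $\Delta_M(ms)=\Delta_M(m)\Delta_S(s)$. $\mathrm{W}^n_S(M)=\mathrm{Hom}_S(M,M\otimes H^{\otimes n})$, algebra under $\circ\!\!\cdot$ (composition for $n=0$; for $n>0$, if $\varphi'(m)=\sum m'\otimes a$, $\varphi(m')=\sum m''\otimes b$ then $(\varphi\circ\!\!\cdot\varphi')(m)=\sum m''\otimes ba$). Cofaces: $b^0\varphi=(\mathrm{id}_M\otimes\mu_H)(\Delta_M\otimes\mathrm{id}_H)(\varphi\otimes\sigma_H)\Delta_M$, $b^1\varphi=\varphi\otimes\eta_H$; $b^0\Phi=(\mathrm{id}_M\otimes\mu_H\otimes\mathrm{id}_H)(\Delta_M\otimes T)(\Phi\otimes\sigma_H)\Delta_M$ ($T$ flip of $H\otimes H$), $b^1\Phi=(\mathrm{id}_M\otimes\Delta_H)\Phi$, $b^2\Phi=\Phi\otimes\eta_H$.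 $\mathcal{W}^\times_{\le2}(H,M)$ is the pre-cosimplicial group of $\circ\!\!\cdot$-units $\mathrm{W}^0_S(M)^\times\rightrightarrows\mathrm{W}^1_S(M)^\times\to\mathrm{W}^2_S(M)^\times$ with these cofaces. $\omega_n(f\otimes\underline h)(m)=f(m)\otimes\underline h$; Condition $(\mathcal{F}_n)$: $\omega_n$ bijective. For an $H$-comodule algebra $E$, $\mathcal{C}^\times_{\le2}(H,E)$ is $E^\times\rightrightarrows(E\otimes H)^\times\to(E\otimes H\otimes H)^\times$ with $d^0(x)=\Delta_E(x)$, $d^1(x)=x\otimes1$, $d^0(X)=(\Delta_E\otimes\mathrm{id})(X)$, $d^1(X)=(\mathrm{id}\otimes\Delta_H)(X)$, $d^2(X)=X\otimes1$. *)

(* Hopf-algebraic setting of Prop. 2.5, with tensor products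
   over the commutative ring k given abstractly by their universal property. *)
From HB Require Import structures.
From mathcomp Require Import all_boot all_algebra.
From Stdlib Require Import ClassicalEpsilon.
Set Implicit Arguments. Unset Strict Implicit. Unset Printing Implicit Defensive.
Import GRing.Theory.
Local Open Scope ring_scope.

Section HopfDefs.
Variable k : comNzRingType.

Definition klinear (U V : lmodType k) (f : U -> V) : Prop :=
  forall (a : k) (u v : U), f (a *: u + v) = a *: f u + f v.

Definition kbilinear (U V W : lmodType k) (f : U -> V -> W) : Prop :=
  (forall v, klinear (fun u => f u v)) /\ (forall u, klinear (f u)).

Definition is_tensor (U V T : lmodType k) (t : U -> V -> T) : Prop :=
  kbilinear t /\
  forall (W : lmodType k) (f : U -> V -> W), kbilinear f ->
    exists! g : T -> W, klinear g /\ forall u v, g (t u v) = f u v.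

Definition tlift (U V T W : lmodType k) (t : U -> V -> T) (f : U -> V -> W)
  : T -> W :=
  epsilon (inhabits (fun _ : T => (0 : W)))
          (fun g => klinear g /\ forall u v, g (t u v) = f u v).

(* product on a tensor product of two algebras: (a(x)b)(c(x)d) = ac (x) bd *)
Definition tmul (A B AB : lmodType k) (t : A -> B -> AB)
  (mulA : A -> A -> A) (mulB : B -> B -> B) (x y : AB) : AB :=
  tlift t (fun a b => tlift t (fun c d => t (mulA a c) (mulB b d)) y) x.

Definition is_hopf (H : algType k) (HH HHH : lmodType k)
  (tHH : H -> H -> HH) (tHHH : H -> HH -> HHH)
  (D : H -> HH) (eps : H -> k) (sig : H -> H) : Prop :=
  (is_tensor tHH) /\ (is_tensor tHHH) /\ (klinear D) /\ (klinear sig) /\ ((forall (a : k) x y, eps (a *: x + y) = a * eps x + eps y)) /\ ((forall h, tlift tHH (fun a b => tlift tHH (fun c d => tHHH c (tHH d b)) (D a)) (D h)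
                 = tlift tHH (fun a b => tHHH a (D b)) (D h))) /\ ((forall h, tlift tHH (fun a b => eps a *: b) (D h) = h
              /\ tlift tHH (fun a b => eps b *: a) (D h) = h)) /\ ((forall x y, D (x * y) = tmul tHH *%R *%R (D x) (D y)) /\ D 1 = tHH 1 1) /\ ((forall x y, eps (x * y) = eps x * eps y) /\ eps 1 = 1) /\ (forall h, tlift tHH (fun a b => sig a * b) (D h) = eps h *: 1
             /\ tlift tHH (fun a b => a * sig b) (D h) = eps h *: 1).

Definition is_comodule_algebra (H : algType k) (HH : lmodType k)
  (tHH : H -> H -> HH) (D : H -> HH) (eps : H -> k)
  (S : algType k) (SH SHH : lmodType k) (tSH : S -> H -> SH) (tSHH : S -> HH -> SHH)
  (DS : S -> SH) : Prop :=
  (is_tensor tSH) /\ (is_tensor tSHH) /\ (klinear DS) /\ ((forall x, tlift tSH (fun s h => tlift tSH (fun s' g => tSHH s' (tHH g h)) (DS s)) (DS x)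
                 = tlift tSH (fun s h => tSHH s (D h)) (DS x))) /\ ((forall x, tlift tSH (fun s h => eps h *: s) (DS x) = x)) /\ ((forall x y, DS (x * y) = tmul tSH *%R *%R (DS x) (DS y))) /\ (DS 1 = tSH 1 1).

Definition is_right_module (S : algType k) (M : lmodType k) (act : M -> S -> M) : Prop :=
  (kbilinear act) /\ ((forall m s t, act (act m s) t = act m (s * t))) /\ (forall m, act m 1 = m).

Definition is_hopf_module (H : algType k) (HH : lmodType k)
  (tHH : H -> H -> HH) (D : H -> HH) (eps : H -> k)
  (S : algType k) (SH : lmodType k) (tSH : S -> H -> SH) (DS : S -> SH)
  (M : lmodType k) (act : M -> S -> M) (MH MHH : lmodType k)
  (tMH : M -> H -> MH) (tMHH : M -> HH -> MHH) (DM : M -> MH) : Prop :=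
  (is_right_module act) /\ (is_tensor tMH) /\ (is_tensor tMHH) /\ (klinear DM) /\ ((forall x, tlift tMH (fun m h => tlift tMH (fun n g => tMHH n (tHH g h)) (DM m)) (DM x)
                 = tlift tMH (fun m h => tMHH m (D h)) (DM x))) /\ ((forall x, tlift tMH (fun m h => eps h *: m) (DM x) = x)) /\ (forall m s, DM (act m s)
        = tlift tMH (fun n h => tlift tSH (fun s' g => tMH (act n s') (h * g)) (DS s)) (DM m)).

Definition tact (S : algType k) (M X MX : lmodType k) (act : M -> S -> M)
  (t : M -> X -> MX) (y : MX) (s : S) : MX :=
  tlift t (fun m x => t (act m s) x) y.

Definition Slinear (S : algType k) (M T : lmodType k) (act : M -> S -> M)
  (actT : T -> S -> T) (phi : M -> T) : Prop :=
  klinear phi /\ forall m s, phi (act m s) = actT (phi m) s.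

(* iota : E -> (M -> M) identifies E with End_S(M) as a k-module *)
Definition is_EndS (S : algType k) (M : lmodType k) (act : M -> S -> M)
  (E : lmodType k) (iota : E -> M -> M) : Prop :=
  ((forall (a : k) e e' m, iota (a *: e + e') m = a *: iota e m + iota e' m)) /\ ((forall e, Slinear act act (iota e))) /\ ((forall e e', (forall m, iota e m = iota e' m) -> e = e')) /\ (forall phi, Slinear act act phi -> exists e, forall m, iota e m = phi m).

Definition mulE (M E : lmodType k) (iota : E -> M -> M) (e e' : E) : E :=
  epsilon (inhabits 0) (fun x => forall m, iota x m = iota e (iota e' m)).
Definition oneE (M E : lmodType k) (iota : E -> M -> M) : E :=
  epsilon (inhabits 0) (fun x => forall m, iota x m = m).

Definition omega (M E X EX MX : lmodType k) (iota : E -> M -> M)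
  (tEX : E -> X -> EX) (tMX : M -> X -> MX) (y : EX) (m : M) : MX :=
  tlift tEX (fun e x => tMX (iota e m) x) y.

Definition condF (S : algType k) (M : lmodType k) (act : M -> S -> M)
  (E X EX MX : lmodType k) (iota : E -> M -> M)
  (tEX : E -> X -> EX) (tMX : M -> X -> MX) : Prop :=
  (forall x y, (forall m, omega iota tEX tMX x m = omega iota tEX tMX y m) -> x = y) /\
  (forall phi, Slinear act (tact act tMX) phi ->
     exists x, forall m, omega iota tEX tMX x m = phi m).

Definition b0_0 (H : algType k) (M MH : lmodType k) (tMH : M -> H -> MH)
  (DM : M -> MH) (sig : H -> H) (phi : M -> M) (m : M) : MH :=
  tlift tMH (fun m0 m1 => tlift tMH (fun n g => tMH n (g * sig m1)) (DM (phi m0))) (DM m).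
Definition b1_0 (H : algType k) (M MH : lmodType k) (tMH : M -> H -> MH)
  (phi : M -> M) (m : M) : MH := tMH (phi m) 1.
Definition b0_1 (H : algType k) (HH M MH MHH : lmodType k) (tHH : H -> H -> HH)
  (tMH : M -> H -> MH) (tMHH : M -> HH -> MHH) (DM : M -> MH) (sig : H -> H)
  (Phi : M -> MH) (m : M) : MHH :=
  tlift tMH (fun m0 m1 =>
    tlift tMH (fun m' h => tlift tMH (fun n g => tMHH n (tHH (g * sig m1) h)) (DM m'))
      (Phi m0)) (DM m).
Definition b1_1 (H : algType k) (HH M MH MHH : lmodType k)
  (tMH : M -> H -> MH) (tMHH : M -> HH -> MHH) (D : H -> HH)
  (Phi : M -> MH) (m : M) : MHH := tlift tMH (fun n h => tMHH n (D h)) (Phi m).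
Definition b2_1 (H : algType k) (HH M MH MHH : lmodType k) (tHH : H -> H -> HH)
  (tMH : M -> H -> MH) (tMHH : M -> HH -> MHH)
  (Phi : M -> MH) (m : M) : MHH := tlift tMH (fun n h => tMHH n (tHH h 1)) (Phi m).

Definition wmul (X M MX : lmodType k) (tMX : M -> X -> MX) (mulX : X -> X -> X)
  (phi phi' : M -> MX) (m : M) : MX :=
  tlift tMX (fun m' a => tlift tMX (fun m'' b => tMX m'' (mulX b a)) (phi m')) (phi' m).

Definition is_unit (A : Type) (mul : A -> A -> A) (one : A) (x : A) : Prop :=
  exists y, mul x y = one /\ mul y x = one.

Definition is_unitW (M T : Type) (inW : (M -> T) -> Prop)
  (mulW : (M -> T) -> (M -> T) -> M -> T) (oneW : M -> T) (phi : M -> T) : Prop :=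
  inW phi /\ exists psi, inW psi /\ (forall m, mulW phi psi m = oneW m)
                                  /\ (forall m, mulW psi phi m = oneW m).

Definition unit_group_iso (A M T : Type) (mulA : A -> A -> A) (oneA : A)
  (inW : (M -> T) -> Prop) (mulW : (M -> T) -> (M -> T) -> M -> T) (oneW : M -> T)
  (om : A -> M -> T) : Prop :=
  ((forall x, is_unit mulA oneA x -> is_unitW inW mulW oneW (om x))) /\ ((forall x y, is_unit mulA oneA x -> is_unit mulA oneA y ->
         forall m, om (mulA x y) m = mulW (om x) (om y) m)) /\ ((forall x y, is_unit mulA oneA x -> is_unit mulA oneA y ->
         (forall m, om x m = om y m) -> x = y)) /\ ((forall phi, is_unitW inW mulW oneW phi ->
         exists x, is_unit mulA oneA x /\ forall m, om x m = phi m)).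

Definition DeltaE (H : algType k) (M E MH EH : lmodType k) (iota : E -> M -> M)
  (tEH : E -> H -> EH) (tMH : M -> H -> MH) (DM : M -> MH) (sig : H -> H) (e : E) : EH :=
  epsilon (inhabits 0)
    (fun x => forall m, omega iota tEH tMH x m = b0_0 tMH DM sig (iota e) m).

Definition d1_0 (H : algType k) (E EH : lmodType k) (tEH : E -> H -> EH) (e : E) : EH :=
  tEH e 1.
Definition d0_1 (H : algType k) (HH E EH EHH : lmodType k) (tHH : H -> H -> HH)
  (tEH : E -> H -> EH) (tEHH : E -> HH -> EHH) (DE : E -> EH) (X : EH) : EHH :=
  tlift tEH (fun e h => tlift tEH (fun e0 e1 => tEHH e0 (tHH e1 h)) (DE e)) X.
Definition d1_1 (H : algType k) (HH E EH EHH : lmodType k)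
  (tEH : E -> H -> EH) (tEHH : E -> HH -> EHH) (D : H -> HH) (X : EH) : EHH :=
  tlift tEH (fun e h => tEHH e (D h)) X.
Definition d2_1 (H : algType k) (HH E EH EHH : lmodType k) (tHH : H -> H -> HH)
  (tEH : E -> H -> EH) (tEHH : E -> HH -> EHH) (X : EH) : EHH :=
  tlift tEH (fun e h => tEHH e (tHH h 1)) X.

End HopfDefs.

(* On pure tensors omega(f (x) a) o. omega(g (x) b)
   = omega(fg (x) ab), so omega_n is multiplicative and restricts to an isomorphism
   of unit groups.  Delta_E = omega_1^-1 o b^0 is well defined because b^0 phi is
   again S-linear: in b^0 phi (ms) the Hopf-module compatibility produces the factor
   sig(m_(1) s_(1)) = sig(s_(1)) sig(m_(1)) (the antipode is anti-multiplicative), and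
   s_(1) sig(s_(2)) then collapses by the antipode and counit axioms.  Each coface
   identity omega_j d^i = b^i omega_(j-1) is an equality of linear maps out of a
   tensor product, so it suffices to check it on pure tensors. *)
From HB Require Import structures.
From mathcomp Require Import all_boot all_algebra.
From Stdlib Require Import ClassicalEpsilon FunctionalExtensionality.
Set Implicit Arguments. Unset Strict Implicit. Unset Printing Implicit Defensive.
Import GRing.Theory.
Local Open Scope ring_scope.

Section LinearMaps.
Variable k : comNzRingType.

Lemma klinear0 (U V : lmodType k) (f : U -> V) : klinear f -> f 0 = 0.
Proof.
move=> Hf; have := Hf 1 0 0; rewrite !scale1r addr0 => Hf0.
by apply: (addrI (f 0)); rewrite addr0 -Hf0.
Qed.

Lemma klinearZ (U V : lmodType k) (f : U -> V) a u :
  klinear f -> f (a *: u) = a *: f u.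
Proof. by move=> Hf; have := Hf a u 0; rewrite addr0 (klinear0 Hf) addr0. Qed.

Lemma klinear_id (U : lmodType k) : klinear (fun u : U => u).
Proof. by []. Qed.

Lemma klinear_comp (U V W : lmodType k) (L : V -> W) (f : U -> V) :
  klinear L -> klinear f -> klinear (fun u => L (f u)).
Proof. by move=> HL Hf a u v; rewrite Hf HL. Qed.

Lemma klinear_bilinearl (U V X W : lmodType k) (f : V -> X -> W) (g : U -> V) c :
  kbilinear f -> klinear g -> klinear (fun u => f (g u) c).
Proof. by move=> [Hf _] Hg a u v; rewrite Hg Hf. Qed.

Lemma klinear_bilinearr (V X W : lmodType k) (f : V -> X -> W) c :
  kbilinear f -> klinear (f c).
Proof. by case. Qed.

Lemma klinear_add (U W : lmodType k) (f g : U -> W) :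
  klinear f -> klinear g -> klinear (fun u => f u + g u).
Proof.
move=> Hf Hg a u v; rewrite Hf Hg scalerDr -!addrA; congr (_ + _).
by rewrite addrCA.
Qed.

Lemma klinear_scale (W : lmodType k) (c : k) : klinear (fun w : W => c *: w).
Proof. by move=> a u v; rewrite scalerDr !scalerA mulrC. Qed.

Lemma klinear_form_scale (U V W : lmodType k) (l : V -> k) (f : U -> V) (c : W) :
  (forall (a : k) x y, l (a *: x + y) = a * l x + l y) -> klinear f ->
  klinear (fun u => l (f u) *: c).
Proof. by move=> Hl Hf a u v; rewrite Hf Hl scalerDl scalerA. Qed.

Lemma mul_kbilinear (A : algType k) : kbilinear (@GRing.mul A).
Proof.
split=> [v|u] a x y /=; first by rewrite mulrDl scalerAl.
by rewrite mulrDr scalerAr.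
Qed.

End LinearMaps.

Section TensorLift.
Variable k : comNzRingType.
Variables (U V T : lmodType k) (t : U -> V -> T).

Lemma tensor_kbilinear : is_tensor t -> kbilinear t.
Proof. by case. Qed.

Lemma tlift_spec (W : lmodType k) (f : U -> V -> W) : is_tensor t -> kbilinear f ->
  klinear (tlift t f) /\ forall u v, tlift t f (t u v) = f u v.
Proof.
move=> [_ Huniv] Hf; rewrite /tlift; apply epsilon_spec.
by case: (Huniv W f Hf) => g [Hg _]; exists g.
Qed.

Lemma tlift_klinear (W : lmodType k) (f : U -> V -> W) :
  is_tensor t -> kbilinear f -> klinear (tlift t f).
Proof. by move=> Ht /(tlift_spec Ht) []. Qed.

Lemma tliftE (W : lmodType k) (f : U -> V -> W) u v :
  is_tensor t -> kbilinear f -> tlift t f (t u v) = f u v.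
Proof. by move=> Ht /(tlift_spec Ht) [_ ->]. Qed.

Lemma tlift_unique (W : lmodType k) (f : U -> V -> W) (g : T -> W) :
  is_tensor t -> kbilinear f -> klinear g -> (forall u v, g (t u v) = f u v) ->
  forall y, g y = tlift t f y.
Proof.
move=> Ht Hf Hg Hgt y; have [Hl HlE] := tlift_spec Ht Hf.
case: Ht => _ Huniv; case: (Huniv W f Hf) => g0 [_ Hu].
by rewrite -(Hu g (conj Hg Hgt)) -(Hu _ (conj Hl HlE)).
Qed.

Lemma tensor_klinear_ext (W : lmodType k) (g1 g2 : T -> W) :
  is_tensor t -> klinear g1 -> klinear g2 -> (forall u v, g1 (t u v) = g2 (t u v)) ->
  forall y, g1 y = g2 y.
Proof.
move=> Ht H1 H2 Heq y.
have Hb : kbilinear (fun u v => g1 (t u v)).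
  case: (tensor_kbilinear Ht) => Hl Hr.
  by split=> [v|u] a x z /=; [rewrite Hl H1 | rewrite Hr H1].
by rewrite (tlift_unique Ht Hb H1 (fun _ _ => erefl)) (tlift_unique Ht Hb H2).
Qed.

Lemma eq_tlift (W : lmodType k) (f g : U -> V -> W) y :
  (forall u v, f u v = g u v) -> tlift t f y = tlift t g y.
Proof.
move=> Hfg; suff -> : f = g by [].
by apply: functional_extensionality => u; apply: functional_extensionality.
Qed.

Lemma klinear_tlift (W W' : lmodType k) (f : U -> V -> W) (L : W -> W') y :
  is_tensor t -> kbilinear f -> klinear L ->
  L (tlift t f y) = tlift t (fun u v => L (f u v)) y.
Proof.
move=> Ht Hf HL.
have Hb : kbilinear (fun u v => L (f u v)).
  case: Hf => Hl Hr.
  by split=> [v|u] a x z /=; [rewrite Hl HL | rewrite Hr HL].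
apply: (tlift_unique (g := fun y => L (tlift t f y))) => //.
  by apply: klinear_comp => //; exact: tlift_klinear.
by move=> u v; rewrite tliftE.
Qed.

Lemma tlift_combination (W : lmodType k) (f g : U -> V -> W) (a : k) y :
  is_tensor t -> kbilinear f -> kbilinear g ->
  tlift t (fun u v => a *: f u v + g u v) y = a *: tlift t f y + tlift t g y.
Proof.
move=> Ht Hf Hg.
have Hb : kbilinear (fun u v => a *: f u v + g u v).
  case: Hf => Hfl Hfr; case: Hg => Hgl Hgr.
  split=> [v|u]; apply: klinear_add => //;
    by apply: klinear_comp; [apply: klinear_scale | ].
symmetry; apply: (tlift_unique (g := fun y => a *: tlift t f y + tlift t g y)) => //.
  apply: klinear_add; last exact: tlift_klinear.
  by apply: klinear_comp; [exact: klinear_scale | exact: tlift_klinear].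
by move=> u v; rewrite !tliftE.
Qed.

Lemma klinear_tlift_param (P W : lmodType k) (F : P -> U -> V -> W) y :
  is_tensor t -> (forall p, kbilinear (F p)) -> (forall u v, klinear (fun p => F p u v)) ->
  klinear (fun p => tlift t (F p) y).
Proof.
move=> Ht Hb Hl a p q; rewrite -tlift_combination //.
by apply: eq_tlift => u v; exact: Hl.
Qed.

End TensorLift.

Lemma tlift_swap (k : comNzRingType) (A B T A' B' T' W : lmodType k)
    (t : A -> B -> T) (t' : A' -> B' -> T') (F : A -> B -> A' -> B' -> W) y y' :
  is_tensor t -> is_tensor t' -> (forall a b, kbilinear (F a b)) ->
  (forall c d, kbilinear (fun a b => F a b c d)) ->
  tlift t (fun a b => tlift t' (F a b) y') y
  = tlift t' (fun c d => tlift t (fun a b => F a b c d) y) y'.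
Proof.
move=> Ht Ht' H1 H2.
have Hb2 : kbilinear (fun c d => tlift t (fun a b => F a b c d) y).
  by split=> [d|c]; apply: klinear_tlift_param => // a b; case: (H1 a b).
have Hb1 z : kbilinear (fun a b => tlift t' (F a b) z).
  by split=> [b|a]; apply: klinear_tlift_param => // c d; case: (H2 c d).
move: y'; apply: (tensor_klinear_ext Ht').
- by apply: klinear_tlift_param => // a b; exact: tlift_klinear.
- exact: tlift_klinear.
move=> c d; rewrite tliftE //; apply: eq_tlift => a b; exact: tliftE.
Qed.

(* Discharges the k-(bi)linearity side conditions of the lemmas above by
   structural recursion on the map; the leaves are closed by hypotheses in the
   context, from which [apply] also extracts conjuncts of the bundled axioms. *)
Ltac solve_kbilinear :=
  first [ match goal with Hh : _ |- _ => solve [apply Hh] end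
        | apply: mul_kbilinear
        | match goal with |- kbilinear (fun _ _ => _) =>
            split; intros; cbv beta; solve_klinear end ]
with solve_klinear_head :=
  first [ assumption
        | apply: klinear_scale
        | match goal with
          | |- klinear (tlift ?t ?f) => apply: tlift_klinear; [assumption | solve_kbilinear]
          | |- klinear (?f ?c) => apply: klinear_bilinearr; solve_kbilinear
          end ]
with solve_klinear :=
  cbv beta;
  first [ match goal with Hh : _ |- _ => solve [apply Hh] end |
  match goal with
  | |- klinear (fun u => u) => apply: klinear_id
  | |- klinear (fun u => tlift ?t (@?F u) ?y) =>
      apply: (klinear_tlift_param (F := F));
        [assumption | intro; solve_kbilinear | intros; solve_klinear]
  | |- klinear (fun u => ?l (@?f u) *: ?c) =>
      apply: (klinear_form_scale (l := l) (f := f)); [assumption | solve_klinear]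
  | |- klinear (fun u => @?f u + @?g u) =>
      apply: (klinear_add (f := f) (g := g)); solve_klinear
  | |- klinear (fun u => ?L (@?f u)) =>
      apply: (klinear_comp (L := L) (f := f)); [solve_klinear_head | solve_klinear]
  | |- klinear (fun u => ?g (@?f u) ?c) =>
      apply: (klinear_bilinearl (f := g) (g := f)); [solve_kbilinear | solve_klinear]
  end ].

Ltac linearity :=
  try (solve [intros; first [assumption | solve_kbilinear | solve_klinear_head | solve_klinear]]).

Lemma tmul_kbilinear (k : comNzRingType) (A B AB : lmodType k) (t : A -> B -> AB)
    mulA mulB :
  is_tensor t -> kbilinear mulA -> kbilinear mulB -> kbilinear (tmul t mulA mulB).
Proof.
move=> Ht HA HB; have Htb := tensor_kbilinear Ht.
rewrite /tmul; solve_kbilinear.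
Qed.

Section Hopf.
Variable k : comNzRingType.
Variables (H : algType k) (HH HHH : lmodType k)
  (tHH : H -> H -> HH) (tHHH : H -> HH -> HHH)
  (D : H -> HH) (eps : H -> k) (sig : H -> H).
Hypothesis Hhopf : is_hopf tHH tHHH D eps sig.

Let HtHH : is_tensor tHH. Proof. by case: Hhopf. Qed.
Let HtHHH : is_tensor tHHH. Proof. by case: Hhopf => _ []. Qed.
Let HD : klinear D. Proof. by case: Hhopf => _ [_ []]. Qed.
Let Hsig : klinear sig. Proof. by case: Hhopf => _ [_ [_ []]]. Qed.
Let Heps : forall (a : k) x y, eps (a *: x + y) = a * eps x + eps y.
Proof. by case: Hhopf => _ [_ [_ [_ []]]]. Qed.
Let Hcoass h : tlift tHH (fun a b => tlift tHH (fun c d => tHHH c (tHH d b)) (D a)) (D h)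
             = tlift tHH (fun a b => tHHH a (D b)) (D h).
Proof. by case: Hhopf => _ [_ [_ [_ [_ []]]]]. Qed.
Let Hcounit h : tlift tHH (fun a b => eps a *: b) (D h) = h
             /\ tlift tHH (fun a b => eps b *: a) (D h) = h.
Proof. by case: Hhopf => _ [_ [_ [_ [_ [_ []]]]]]. Qed.
Let HDmul x y : D (x * y) = tmul tHH *%R *%R (D x) (D y).
Proof. by case: Hhopf => _ [_ [_ [_ [_ [_ [_ [[]]]]]]]]. Qed.
Let HepsM x y : eps (x * y) = eps x * eps y.
Proof. by case: Hhopf => _ [_ [_ [_ [_ [_ [_ [_ [[]]]]]]]]]. Qed.
Let Hanti h : tlift tHH (fun a b => sig a * b) (D h) = eps h *: 1
           /\ tlift tHH (fun a b => a * sig b) (D h) = eps h *: 1.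
Proof. by case: Hhopf => _ [_ [_ [_ [_ [_ [_ [_ [_ ]]]]]]]]. Qed.

Lemma coassoc_tlift (W : lmodType k) (f : H -> H -> H -> W) :
  (forall b c, klinear (fun a => f a b c)) -> (forall a c, klinear (fun b => f a b c)) ->
  (forall a b, klinear (f a b)) -> forall h,
  tlift tHH (fun a b => tlift tHH (fun c d => f c d b) (D a)) (D h)
  = tlift tHH (fun a b => tlift tHH (fun c d => f a c d) (D b)) (D h).
Proof.
move=> H1 H2 H3 h.
pose Phi := tlift tHHH (fun a bc => tlift tHH (fun b c => f a b c) bc).
have HPhi : klinear Phi by rewrite /Phi; solve_klinear_head.
have := congr1 Phi (Hcoass h); rewrite !(klinear_tlift (L := Phi)); linearity.
move=> Ecoass; apply: etrans (etrans _ Ecoass) _.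
  apply: eq_tlift => a b; rewrite (klinear_tlift (L := Phi)); linearity.
  by apply: eq_tlift => c d; rewrite /Phi !tliftE //; linearity.
by apply: eq_tlift => a b; rewrite /Phi tliftE //; linearity.
Qed.

Lemma counitr_tlift (W : lmodType k) (G : H -> W) : klinear G -> forall h,
  tlift tHH (fun c d => eps d *: G c) (D h) = G h.
Proof.
move=> HG h; rewrite -[in RHS](proj2 (Hcounit h)) (klinear_tlift (L := G)); linearity.
by apply: eq_tlift => a b; rewrite klinearZ.
Qed.

Lemma counitl_tlift (W : lmodType k) (G : H -> W) : klinear G -> forall h,
  tlift tHH (fun c d => eps c *: G d) (D h) = G h.
Proof.
move=> HG h; rewrite -[in RHS](proj1 (Hcounit h)) (klinear_tlift (L := G)); linearity.
by apply: eq_tlift => a b; rewrite klinearZ.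
Qed.

Lemma antipodel_tlift (W : lmodType k) (L : H -> W) : klinear L -> forall h,
  tlift tHH (fun a b => L (sig a * b)) (D h) = eps h *: L 1.
Proof.
move=> HL h; rewrite -(klinear_tlift (L := L) (f := fun a b => sig a * b)); linearity.
by rewrite (proj1 (Hanti h)) klinearZ.
Qed.

Lemma antipoder_tlift (W : lmodType k) (L : H -> W) : klinear L -> forall h,
  tlift tHH (fun a b => L (a * sig b)) (D h) = eps h *: L 1.
Proof.
move=> HL h; rewrite -(klinear_tlift (L := L) (f := fun a b => a * sig b)); linearity.
by rewrite (proj2 (Hanti h)) klinearZ.
Qed.

Lemma comulM_tlift (W : lmodType k) (G : H -> H -> W) : kbilinear G -> forall x y,
  tlift tHH G (D (x * y))
  = tlift tHH (fun a b => tlift tHH (fun c d => G (a * c) (b * d)) (D y)) (D x).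
Proof.
move=> HG x y; rewrite HDmul /tmul (klinear_tlift (L := tlift tHH G)); linearity.
apply: eq_tlift => a b; rewrite (klinear_tlift (L := tlift tHH G)); linearity.
by apply: eq_tlift => c d; rewrite tliftE //; linearity.
Qed.

(* sum of sig(x1 y1) x2 y2 sig(y3) sig(x3), evaluated in two ways *)
Definition antipodeM_sum x y : H :=
  tlift tHH (fun a b => tlift tHH (fun c d => tlift tHH (fun p q =>
    tlift tHH (fun r s => sig (a * c) * (p * r) * sig s * sig q) (D d)) (D b)) (D y)) (D x).

Lemma antipodeM_sumE x y : antipodeM_sum x y = sig (x * y).
Proof.
rewrite /antipodeM_sum.
transitivity (tlift tHH (fun a b => tlift tHH (fun c d => eps d *:
     tlift tHH (fun p q => sig (a * c) * p * sig q) (D b)) (D y)) (D x)).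
  apply: eq_tlift => a b; apply: eq_tlift => c d.
  rewrite [RHS](klinear_tlift (L := GRing.scale (eps d))); linearity.
  apply: eq_tlift => p q.
  transitivity (tlift tHH (fun r s => (fun z => sig (a * c) * p * z * sig q) (r * sig s)) (D d)).
    by apply: eq_tlift => r s /=; rewrite !mulrA.
  by rewrite (antipoder_tlift (L := fun z => sig (a * c) * p * z * sig q)) ?mulr1; linearity.
transitivity (tlift tHH (fun a b => tlift tHH (fun p q => sig (a * y) * p * sig q) (D b)) (D x)).
  apply: eq_tlift => a b.
  by rewrite (counitr_tlift (G := fun c => tlift tHH (fun p q => sig (a * c) * p * sig q) (D b)));
    linearity.
transitivity (tlift tHH (fun a b => eps b *: sig (a * y)) (D x)).
  apply: eq_tlift => a b.
  transitivity (tlift tHH (fun p q => (fun z => sig (a * y) * z) (p * sig q)) (D b)).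
    by apply: eq_tlift => r s /=; rewrite !mulrA.
  by rewrite (antipoder_tlift (L := fun z => sig (a * y) * z)) ?mulr1; linearity.
by rewrite (counitr_tlift (G := fun a => sig (a * y))); linearity.
Qed.

Lemma antipodeM_sumE_rev x y : antipodeM_sum x y = sig y * sig x.
Proof.
rewrite /antipodeM_sum.
transitivity (tlift tHH (fun a b => tlift tHH (fun p q => tlift tHH (fun c d =>
     tlift tHH (fun r s => sig (a * c) * (p * r) * sig s * sig q) (D d)) (D y)) (D b)) (D x)).
  apply: eq_tlift => a b.
  by rewrite (tlift_swap (F := fun c d p q =>
     tlift tHH (fun r s => sig (a * c) * (p * r) * sig s * sig q) (D d))); linearity.
transitivity (tlift tHH (fun a b => tlift tHH (fun a1 a2 => tlift tHH (fun c d =>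
     tlift tHH (fun r s => sig (a1 * c) * (a2 * r) * sig s * sig b) (D d)) (D y)) (D a)) (D x)).
  by rewrite -(coassoc_tlift (f := fun a p q => tlift tHH (fun c d =>
     tlift tHH (fun r s => sig (a * c) * (p * r) * sig s * sig q) (D d)) (D y))); linearity.
transitivity (tlift tHH (fun a b => tlift tHH (fun a1 a2 => tlift tHH (fun c d =>
     tlift tHH (fun c1 c2 => sig (a1 * c1) * (a2 * c2) * sig d * sig b) (D c)) (D y)) (D a))
     (D x)).
  apply: eq_tlift => a b; apply: eq_tlift => a1 a2.
  by rewrite -(coassoc_tlift (f := fun c r s => sig (a1 * c) * (a2 * r) * sig s * sig b));
    linearity.
transitivity (tlift tHH (fun a b => tlift tHH (fun c d => tlift tHH (fun a1 a2 =>
     tlift tHH (fun c1 c2 => sig (a1 * c1) * (a2 * c2) * sig d * sig b) (D c)) (D a)) (D y))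
     (D x)).
  apply: eq_tlift => a b.
  by rewrite (tlift_swap (F := fun a1 a2 c d =>
     tlift tHH (fun c1 c2 => sig (a1 * c1) * (a2 * c2) * sig d * sig b) (D c))); linearity.
transitivity (tlift tHH (fun a b => tlift tHH (fun c d =>
     eps c *: (eps a *: (sig d * sig b))) (D y)) (D x)).
  apply: eq_tlift => a b; apply: eq_tlift => c d.
  rewrite -(comulM_tlift (G := fun p q => sig p * q * sig d * sig b)); linearity.
  transitivity (tlift tHH (fun p q => (fun z => z * sig d * sig b) (sig p * q)) (D (a * c))).
    by apply: eq_tlift => p q /=.
  rewrite (antipodel_tlift (L := fun z => z * sig d * sig b)); linearity.
  by rewrite mul1r HepsM scalerA mulrC.
transitivity (tlift tHH (fun a b => eps a *: (sig y * sig b)) (D x)).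
  apply: eq_tlift => a b.
  by rewrite (counitl_tlift (G := fun d => eps a *: (sig d * sig b))) ?scalerAl; linearity.
by rewrite (counitl_tlift (G := fun b => sig y * sig b)); linearity.
Qed.

Lemma antipodeM x y : sig (x * y) = sig y * sig x.
Proof. by rewrite -antipodeM_sumE antipodeM_sumE_rev. Qed.

Section HopfModule.
Variables (S : algType k) (SH SHH : lmodType k)
  (tSH : S -> H -> SH) (tSHH : S -> HH -> SHH) (DS : S -> SH)
  (M : lmodType k) (act : M -> S -> M) (MH MHH : lmodType k)
  (tMH : M -> H -> MH) (tMHH : M -> HH -> MHH) (DM : M -> MH)
  (E : lmodType k) (iota : E -> M -> M).
Hypothesis Hcom : is_comodule_algebra tHH D eps tSH tSHH DS.
Hypothesis Hmod : is_hopf_module tHH D eps tSH DS act tMH tMHH DM.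
Hypothesis HEnd : is_EndS act iota.

Let HtSH : is_tensor tSH. Proof. by case: Hcom. Qed.
Let HtSHH : is_tensor tSHH. Proof. by case: Hcom => _ []. Qed.
Let HcoassS x :
  tlift tSH (fun s h => tlift tSH (fun s' g => tSHH s' (tHH g h)) (DS s)) (DS x)
  = tlift tSH (fun s h => tSHH s (D h)) (DS x).
Proof. by case: Hcom => _ [_ [_ []]]. Qed.
Let HcounitS x : tlift tSH (fun s h => eps h *: s) (DS x) = x.
Proof. by case: Hcom => _ [_ [_ [_ []]]]. Qed.

Let HtMH : is_tensor tMH. Proof. by case: Hmod => _ []. Qed.
Let HDM : klinear DM. Proof. by case: Hmod => _ [_ [_ []]]. Qed.
Let HDMact m s : DM (act m s)
  = tlift tMH (fun n h => tlift tSH (fun s' g => tMH (act n s') (h * g)) (DS s)) (DM m).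
Proof. by case: Hmod => _ [_ [_ [_ [_ [_ ]]]]]. Qed.

Let Hiota_lin : forall (a : k) e e' m, iota (a *: e + e') m = a *: iota e m + iota e' m.
Proof. by case: HEnd. Qed.
Let Hiota_S e : Slinear act act (iota e). Proof. by case: HEnd => _ []. Qed.
Let Hiota_inj e e' : (forall m, iota e m = iota e' m) -> e = e'.
Proof. by case: HEnd => _ [_ [Hinj _]]; apply: Hinj. Qed.
Let Hiota_surj phi : Slinear act act phi -> exists e, forall m, iota e m = phi m.
Proof. by case: HEnd => _ [_ [_ Hsurj]]; apply: Hsurj. Qed.
Let Hiotab : kbilinear iota.
Proof. by split=> [m|e] a u v; [exact: Hiota_lin | case: (Hiota_S e)]. Qed.

Lemma coassoc_comod_tlift (W : lmodType k) (f : S -> H -> H -> W) :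
  (forall b c, klinear (fun a => f a b c)) -> (forall a c, klinear (fun b => f a b c)) ->
  (forall a b, klinear (f a b)) -> forall x,
  tlift tSH (fun s h => tlift tSH (fun s' g => f s' g h) (DS s)) (DS x)
  = tlift tSH (fun s h => tlift tHH (fun g1 g2 => f s g1 g2) (D h)) (DS x).
Proof.
move=> H1 H2 H3 x.
pose Phi := tlift tSHH (fun s hh => tlift tHH (fun b c => f s b c) hh).
have HPhi : klinear Phi by rewrite /Phi; solve_klinear_head.
have := congr1 Phi (HcoassS x); rewrite !(klinear_tlift (L := Phi)); linearity.
move=> Ecoass; apply: etrans (etrans _ Ecoass) _.
  apply: eq_tlift => a b; rewrite (klinear_tlift (L := Phi)); linearity.
  by apply: eq_tlift => c d; rewrite /Phi !tliftE //; linearity.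
by apply: eq_tlift => a b; rewrite /Phi tliftE //; linearity.
Qed.

Lemma counit_comod_tlift (W : lmodType k) (G : S -> W) : klinear G -> forall x,
  tlift tSH (fun s h => eps h *: G s) (DS x) = G x.
Proof.
move=> HG x; rewrite -[in RHS](HcounitS x) (klinear_tlift (L := G)); linearity.
by apply: eq_tlift => a b; rewrite klinearZ.
Qed.

Lemma comod_antipode_tlift n h1 h s :
  tlift tSH (fun s' g => tlift tSH (fun s'' g'' =>
     tMH (act n s'') (h1 * g'' * (sig g * sig h))) (DS s')) (DS s)
  = tMH (act n s) (h1 * sig h).
Proof.
rewrite (coassoc_comod_tlift
  (f := fun s'' g'' g => tMH (act n s'') (h1 * g'' * (sig g * sig h)))); linearity.
transitivity (tlift tSH (fun s' g => eps g *: tMH (act n s') (h1 * sig h)) (DS s)).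
  apply: eq_tlift => s' g.
  transitivity (tlift tHH (fun g1 g2 =>
    (fun z => tMH (act n s') (h1 * z * sig h)) (g1 * sig g2)) (D g)).
    by apply: eq_tlift => g1 g2 /=; rewrite !mulrA.
  by rewrite (antipoder_tlift (L := fun z => tMH (act n s') (h1 * z * sig h))) ?mulr1;
    linearity.
by rewrite (counit_comod_tlift (G := fun s' => tMH (act n s') (h1 * sig h))); linearity.
Qed.

Lemma b0_0_Slinear phi :
  Slinear act act phi -> Slinear act (tact act tMH) (b0_0 tMH DM sig phi).
Proof.
move=> [Hphi HphiS]; split; first by rewrite /b0_0; solve_klinear.
move=> m s; rewrite /b0_0 /tact HDMact.
transitivity (tlift tMH (fun n h => tlift tSH (fun s' g => tlift tMH (fun n1 h1 =>
   tlift tSH (fun s'' g'' => tMH (act n1 s'') (h1 * g'' * sig (h * g))) (DS s'))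
   (DM (phi n))) (DS s)) (DM m)).
  rewrite (klinear_tlift (L := tlift tMH (fun m0 m1 =>
    tlift tMH (fun n g => tMH n (g * sig m1)) (DM (phi m0)))));
    linearity.
  apply: eq_tlift => n h.
  rewrite (klinear_tlift (L := tlift tMH (fun m0 m1 =>
    tlift tMH (fun n g => tMH n (g * sig m1)) (DM (phi m0)))));
    linearity.
  apply: eq_tlift => s' g; rewrite tliftE; linearity.
  rewrite HphiS HDMact (klinear_tlift (L := tlift tMH (fun n g0 => tMH n (g0 * sig (h * g)))));
    linearity.
  apply: eq_tlift => n1 h1.
  rewrite (klinear_tlift (L := tlift tMH (fun n g0 => tMH n (g0 * sig (h * g))))); linearity.
  by apply: eq_tlift => s'' g''; rewrite tliftE //; linearity.
transitivity (tlift tMH (fun n h => tlift tMH (fun n1 h1 => tlift tSH (fun s' g =>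
   tlift tSH (fun s'' g'' => tMH (act n1 s'') (h1 * g'' * (sig g * sig h))) (DS s'))
   (DS s)) (DM (phi n))) (DM m)).
  apply: eq_tlift => n h.
  rewrite (tlift_swap (F := fun s' g n1 h1 =>
   tlift tSH (fun s'' g'' => tMH (act n1 s'') (h1 * g'' * sig (h * g))) (DS s'))); linearity.
  apply: eq_tlift => n1 h1; apply: eq_tlift => s' g; apply: eq_tlift => s'' g''.
  by rewrite antipodeM.
rewrite (klinear_tlift (L := tlift tMH (fun m x => tMH (act m s) x))); linearity.
apply: eq_tlift => n h; rewrite (klinear_tlift (L := tlift tMH (fun m x => tMH (act m s) x)));
  linearity.
by apply: eq_tlift => n1 h1; rewrite comod_antipode_tlift tliftE //; linearity.
Qed.

Lemma b0_0_combination phi psi a m : klinear phi -> klinear psi ->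
  b0_0 tMH DM sig (fun m => a *: phi m + psi m) m
  = a *: b0_0 tMH DM sig phi m + b0_0 tMH DM sig psi m.
Proof.
move=> Hphi Hpsi; rewrite /b0_0 -tlift_combination; linearity.
apply: eq_tlift => m0 m1.
have HL : klinear (tlift tMH (fun n g => tMH n (g * sig m1))) by solve_klinear_head.
by rewrite HDM HL.
Qed.

Lemma iota_mulE e e' m : iota (mulE iota e e') m = iota e (iota e' m).
Proof.
move: m; rewrite /mulE; apply epsilon_spec; apply: Hiota_surj.
split; first by solve_klinear.
by move=> m0 s; case: (Hiota_S e') => _ ->; case: (Hiota_S e) => _ ->.
Qed.

Lemma iota_oneE m : iota (oneE iota) m = m.
Proof.
move: m; rewrite /oneE; apply epsilon_spec; apply: Hiota_surj.
by split; first by solve_klinear.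
Qed.

Lemma mulE_kbilinear : kbilinear (mulE iota).
Proof.
split=> [e'|e] a u v; apply: Hiota_inj => m; rewrite Hiota_lin !iota_mulE.
  exact: Hiota_lin.
by rewrite Hiota_lin; case: (Hiota_S e) => -> _.
Qed.

Lemma iota_unit_group_iso : unit_group_iso (mulE iota) (oneE iota) (Slinear act act)
  (fun (phi psi : M -> M) (m : M) => phi (psi m)) (fun m : M => m) iota.
Proof.
split; [|split; [|split]].
- move=> x [y [Hxy Hyx]]; split; first exact: Hiota_S.
  exists (iota y); split; first exact: Hiota_S.
  by split=> m; rewrite -iota_mulE ?Hxy ?Hyx iota_oneE.
- by move=> x y _ _ m; rewrite iota_mulE.
- by move=> x y _ _; apply: Hiota_inj.
- move=> phi [Wphi [psi [Wpsi [H1 H2]]]].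
  have [x Hx] := Hiota_surj Wphi; have [y Hy] := Hiota_surj Wpsi.
  exists x; split=> //; exists y; split; apply: Hiota_inj => m.
    by rewrite iota_mulE Hy Hx H1 iota_oneE.
  by rewrite iota_mulE Hx Hy H2 iota_oneE.
Qed.

Section Omega.
Variables (X EX MX : lmodType k) (tEX : E -> X -> EX) (tMX : M -> X -> MX)
  (mulX : X -> X -> X) (oneX : X).
Hypotheses (HtEX : is_tensor tEX) (HtMX : is_tensor tMX) (HmulX : kbilinear mulX)
  (HF : condF act iota tEX tMX).
Let HmEb : kbilinear (mulE iota). Proof. exact: mulE_kbilinear. Qed.

Lemma omega_Slinear Y : Slinear act (tact act tMX) (omega iota tEX tMX Y).
Proof.
rewrite /omega; split; first by solve_klinear.
move=> m s; rewrite /tact (klinear_tlift (L := tlift tMX (fun m0 x => tMX (act m0 s) x)));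
  linearity.
apply: eq_tlift => e x; rewrite tliftE; linearity.
by case: (Hiota_S e) => _ ->.
Qed.

Lemma omegaM Y Z m : omega iota tEX tMX (tmul tEX (mulE iota) mulX Y Z) m
  = wmul tMX mulX (omega iota tEX tMX Y) (omega iota tEX tMX Z) m.
Proof.
rewrite /omega /wmul /tmul.
transitivity (tlift tEX (fun a b =>
  tlift tEX (fun c d => tMX (iota a (iota c m)) (mulX b d)) Z) Y).
  rewrite (klinear_tlift (L := tlift tEX (fun e x => tMX (iota e m) x))); linearity.
  apply: eq_tlift => a b.
  rewrite (klinear_tlift (L := tlift tEX (fun e x => tMX (iota e m) x))); linearity.
  by apply: eq_tlift => c d; rewrite tliftE ?iota_mulE //; linearity.
rewrite (klinear_tlift (L := tlift tMX (fun m' a =>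
  tlift tMX (fun m'' b => tMX m'' (mulX b a)) (tlift tEX (fun e x => tMX (iota e m') x) Y))));
  linearity.
transitivity (tlift tEX (fun c d =>
  tlift tEX (fun a b => tMX (iota a (iota c m)) (mulX b d)) Y) Z).
  by rewrite (tlift_swap (F := fun a b c d => tMX (iota a (iota c m)) (mulX b d))); linearity.
apply: eq_tlift => c d; rewrite tliftE; linearity.
rewrite (klinear_tlift (L := tlift tMX (fun m'' b => tMX m'' (mulX b d)))); linearity.
by apply: eq_tlift => a b; rewrite tliftE //; linearity.
Qed.

Lemma omega1 m : omega iota tEX tMX (tEX (oneE iota) oneX) m = tMX m oneX.
Proof. by rewrite /omega tliftE ?iota_oneE //; linearity. Qed.

Lemma omega_unit_group_iso :
  unit_group_iso (tmul tEX (mulE iota) mulX) (tEX (oneE iota) oneX)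
    (Slinear act (tact act tMX)) (wmul tMX mulX) (fun m => tMX m oneX)
    (omega iota tEX tMX).
Proof.
case: HF => Hinj Hsurj; split; [|split; [|split]].
- move=> x [y [Hxy Hyx]]; split; first exact: omega_Slinear.
  exists (omega iota tEX tMX y); split; first exact: omega_Slinear.
  by split=> m; rewrite -omegaM ?Hxy ?Hyx omega1.
- by move=> x y _ _ m; rewrite omegaM.
- by move=> x y _ _; apply: Hinj.
- move=> phi [Wphi [psi [Wpsi [H1 H2]]]].
  have [x Hx] := Hsurj _ Wphi; have [y Hy] := Hsurj _ Wpsi.
  have ex : omega iota tEX tMX x = phi by apply: functional_extensionality.
  have ey : omega iota tEX tMX y = psi by apply: functional_extensionality.
  exists x; split=> //; exists y; split; apply: Hinj => m.
    by rewrite omegaM ex ey H1 omega1.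
  by rewrite omegaM ex ey H2 omega1.
Qed.

End Omega.

Variables (EH EHH : lmodType k) (tEH : E -> H -> EH) (tEHH : E -> HH -> EHH).
Hypotheses (HtEH : is_tensor tEH) (HtEHH : is_tensor tEHH).

Lemma omega_d1_0 x m : omega iota tEH tMH (d1_0 tEH x) m = b1_0 tMH (iota x) m.
Proof. by rewrite /omega /d1_0 /b1_0 tliftE //; linearity. Qed.

Lemma omega_d1_1 X m :
  omega iota tEHH tMHH (d1_1 tEH tEHH D X) m = b1_1 tMH tMHH D (omega iota tEH tMH X) m.
Proof.
rewrite /omega /d1_1 /b1_1.
rewrite (klinear_tlift (L := tlift tEHH (fun e x => tMHH (iota e m) x))); linearity.
rewrite (klinear_tlift (L := tlift tMH (fun n h => tMHH n (D h)))); linearity.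
by apply: eq_tlift => e h; rewrite !tliftE //; linearity.
Qed.

Lemma omega_d2_1 X m :
  omega iota tEHH tMHH (d2_1 tHH tEH tEHH X) m
  = b2_1 tHH tMH tMHH (omega iota tEH tMH X) m.
Proof.
rewrite /omega /d2_1 /b2_1.
rewrite (klinear_tlift (L := tlift tEHH (fun e x => tMHH (iota e m) x))); linearity.
rewrite (klinear_tlift (L := tlift tMH (fun n h => tMHH n (tHH h 1)))); linearity.
by apply: eq_tlift => e h; rewrite !tliftE //; linearity.
Qed.

Section DeltaE.
Hypothesis HF1 : condF act iota tEH tMH.

Lemma omega_DeltaE e m :
  omega iota tEH tMH (DeltaE iota tEH tMH DM sig e) m = b0_0 tMH DM sig (iota e) m.
Proof.
move: m; rewrite /DeltaE; apply epsilon_spec; case: HF1 => _; apply.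
exact/b0_0_Slinear/Hiota_S.
Qed.

Lemma DeltaE_klinear : klinear (DeltaE iota tEH tMH DM sig).
Proof.
move=> a e e'; case: HF1 => Hinj _; apply: Hinj => m.
have HL : klinear (tlift tEH (fun e x => tMH (iota e m) x)) by solve_klinear_head.
have := omega_DeltaE e m; have := omega_DeltaE e' m; have := omega_DeltaE (a *: e + e') m.
rewrite /omega => -> Ee' Ee; rewrite HL Ee Ee'.
have -> : iota (a *: e + e') = (fun m => a *: iota e m + iota e' m).
  by apply: functional_extensionality => m0; apply: Hiota_lin.
by apply: b0_0_combination; [case: (Hiota_S e) | case: (Hiota_S e')].
Qed.

Let HDE := DeltaE_klinear.

Lemma omega_d0_1 X m :
  omega iota tEHH tMHH (d0_1 tHH tEH tEHH (DeltaE iota tEH tMH DM sig) X) m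
  = b0_1 tHH tMH tMHH DM sig (omega iota tEH tMH X) m.
Proof.
transitivity (tlift tEH (fun e h => tlift tMH (fun m0 m1 => tlift tMH (fun n g =>
     tMHH n (tHH (g * sig m1) h)) (DM (iota e m0))) (DM m)) X).
  rewrite /omega /d0_1.
  rewrite (klinear_tlift (L := tlift tEHH (fun e x => tMHH (iota e m) x))); linearity.
  apply: eq_tlift => e h.
  rewrite (klinear_tlift (L := tlift tEHH (fun e x => tMHH (iota e m) x))); linearity.
  transitivity (tlift tMH (fun n g => tMHH n (tHH g h))
    (omega iota tEH tMH (DeltaE iota tEH tMH DM sig e) m)).
    rewrite /omega (klinear_tlift (L := tlift tMH (fun n g => tMHH n (tHH g h)))); linearity.
    by apply: eq_tlift => e0 e1; rewrite !tliftE //; linearity.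
  rewrite omega_DeltaE /b0_0.
  rewrite (klinear_tlift (L := tlift tMH (fun n g => tMHH n (tHH g h)))); linearity.
  apply: eq_tlift => m0 m1.
  rewrite (klinear_tlift (L := tlift tMH (fun n g => tMHH n (tHH g h)))); linearity.
  by apply: eq_tlift => n g; rewrite !tliftE //; linearity.
rewrite /b0_1 /omega.
transitivity (tlift tMH (fun m0 m1 => tlift tEH (fun e h => tlift tMH (fun n g =>
     tMHH n (tHH (g * sig m1) h)) (DM (iota e m0))) X) (DM m)).
  by rewrite (tlift_swap (F := fun e h m0 m1 => tlift tMH (fun n g =>
     tMHH n (tHH (g * sig m1) h)) (DM (iota e m0)))); linearity.
apply: eq_tlift => m0 m1.
rewrite (klinear_tlift (L := tlift tMH (fun m' h => tlift tMH (fun n g =>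
     tMHH n (tHH (g * sig m1) h)) (DM m')))); linearity.
by apply: eq_tlift => e h; rewrite tliftE //; linearity.
Qed.

End DeltaE.
End HopfModule.
End Hopf.

Theorem proposition2p5
  (k : comNzRingType)
  (* the Hopf algebra H, with HH = H(x)H, HHH = H(x)H(x)H *)
  (H : algType k) (HH HHH : lmodType k)
  (tHH : H -> H -> HH) (tHHH : H -> HH -> HHH)
  (D : H -> HH) (eps : H -> k) (sig : H -> H)
  (* the H-comodule algebra S, with SH = S(x)H, SHH = S(x)H(x)H *)
  (S : algType k) (SH SHH : lmodType k)
  (tSH : S -> H -> SH) (tSHH : S -> HH -> SHH) (DS : S -> SH)
  (* the (H,S)-Hopf module M, with MH = M(x)H, MHH = M(x)H(x)H *)
  (M : lmodType k) (act : M -> S -> M) (MH MHH : lmodType k)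
  (tMH : M -> H -> MH) (tMHH : M -> HH -> MHH) (DM : M -> MH)
  (* E = End_S(M), with EH = E(x)H, EHH = E(x)H(x)H *)
  (E : lmodType k) (iota : E -> M -> M) (EH EHH : lmodType k)
  (tEH : E -> H -> EH) (tEHH : E -> HH -> EHH) :
  is_hopf tHH tHHH D eps sig ->
  is_comodule_algebra tHH D eps tSH tSHH DS ->
  is_hopf_module tHH D eps tSH DS act tMH tMHH DM ->
  is_EndS act iota ->                 (* this is also Condition (F_0) *)
  is_tensor tEH -> is_tensor tEHH ->
  condF act iota tEH tMH ->           (* Condition (F_1) *)
  condF act iota tEHH tMHH ->         (* Condition (F_2) *)
  let DE := DeltaE iota tEH tMH DM sig in
  let mE := mulE iota in
  let oE := oneE iota in
  let mEH := tmul tEH mE *%R in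
  let oEH := tEH oE 1 in
  let mEHH := tmul tEHH mE (tmul tHH *%R *%R) in
  let oEHH := tEHH oE (tHH 1 1) in
  let W0 := Slinear act act in
  let W1 := Slinear act (tact act tMH) in
  let W2 := Slinear act (tact act tMHH) in
  let mW0 := fun (phi psi : M -> M) (m : M) => phi (psi m) in
  let mW1 := wmul tMH *%R in
  let mW2 := wmul tMHH (tmul tHH *%R *%R) in
  let oW0 := fun m : M => m in
  let oW1 := fun m : M => tMH m 1 in
  let oW2 := fun m : M => tMHH m (tHH 1 1) in
  let om1 := omega iota tEH tMH in
  let om2 := omega iota tEHH tMHH in
  (* omega_0, omega_1, omega_2 are isomorphisms of the unit groups *)
  unit_group_iso mE oE W0 mW0 oW0 iota /\
  unit_group_iso mEH oEH W1 mW1 oW1 om1 /\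
  unit_group_iso mEHH oEHH W2 mW2 oW2 om2 /\
  (* and they commute with the cofaces: omega_j d^i = b^i omega_(j-1) *)
  (forall x, is_unit mE oE x -> forall m,
     om1 (DE x) m = b0_0 tMH DM sig (iota x) m /\
     om1 (d1_0 tEH x) m = b1_0 tMH (iota x) m) /\
  (forall X, is_unit mEH oEH X -> forall m,
     om2 (d0_1 tHH tEH tEHH DE X) m = b0_1 tHH tMH tMHH DM sig (om1 X) m /\
     om2 (d1_1 tEH tEHH D X) m = b1_1 tMH tMHH D (om1 X) m /\
     om2 (d2_1 tHH tEH tEHH X) m = b2_1 tHH tMH tMHH (om1 X) m).
Proof.
move=> Hh Hc Hm HE HtEH HtEHH HF1 HF2; cbv zeta.
have HtHH : is_tensor tHH by case: Hh.
have [HtMH HtMHH] : is_tensor tMH /\ is_tensor tMHH by case: Hm => _ [? [? _]].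
have HmulHH : kbilinear (tmul tHH *%R *%R) by apply: tmul_kbilinear => //; exact: mul_kbilinear.
split; first by eapply iota_unit_group_iso; eassumption.
split; first by eapply omega_unit_group_iso; try eassumption; apply: (mul_kbilinear H).
split; first by eapply omega_unit_group_iso; eassumption.
split=> [x _ m | X _ m].
  by split; [eapply omega_DeltaE | eapply omega_d1_0]; eassumption.
by split; [|split]; [eapply omega_d0_1 | eapply omega_d1_1 | eapply omega_d2_1]; eassumption.
Qed.
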